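(* The category $\mathsf{HSLat}$ of Heyting semilattices does not satisfy condition (W): there exist a Heyting semilattice $A$ and subobjects $X,Y,Z\le A$ with $[X,Y]=0$ but $[X,Y,Z]\neq 0$. Equivalently, there exist subobjects $X,Y\le A$ with $[X,Y]=0$ but $[X^A,Y^A]\neq 0$.
   Context: A Heyting semilattice is a meet-semilattice with top $1$ and an operation $\Rightarrow$ with $x\wedge y\le z$ iff $x\le y\Rightarrow z$; $\mathsf{HSLat}$ is the category of these with morphisms preserving $1,\wedge,\Rightarrow$; it is a semi-abelian category (pointed, Barr-exact, protomodular, with binary coproducts) with zero object $\{1\}$. For objects $X_1,\dots,X_n$ ($n\ge2$) the cosmash product $X_1\diamond\cdots\diamond X_n$ is the kernel of the morphism $X_1+\cdots+X_n\to\prod_{k=1}^n\coprod_{j\ne k}X_j$ whose component to $\coprod_{j\ne k}X_j$ sends $X_l$ by the coproduct injection if $l\neq k$ and is $0$ on $X_k$. For subobjects $x_i\colon X_i\rightarrowtail A$, the Higgins commutator $[X_1,\dots,X_n]$ is the regular (epi-mono) image of $X_1\diamond\cdots\diamond X_n$ under $\langle x_1,\dots,x_n\rangle\colon X_1+\cdots+X_n\to A$. $X^A$ denotes the normal closure of $X$ in $A$ (smallest normal subobject, i.e. kernel, of $A$ containing $X$). Condition (W) for a semi-abelian category: for all subobjects $X,Y,Z\le A$, $[X,Y]=0$ implies $[X,Y,Z]=0$. *)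

From mathcomp Require Import all_boot.
From Stdlib Require Import ProofIrrelevance.

Set Implicit Arguments.
Unset Strict Implicit.
Unset Printing Implicit Defensive.

(* x <= y is defined as x /\ y = x.                                    *)
Record HSLat := HSLatPack {
  hcar :> Type;
  htop : hcar;
  hmeet : hcar -> hcar -> hcar;
  himp : hcar -> hcar -> hcar;
  hmeetA : forall x y z, hmeet x (hmeet y z) = hmeet (hmeet x y) z;
  hmeetC : forall x y, hmeet x y = hmeet y x;
  hmeetxx : forall x, hmeet x x = x;
  hmeet1 : forall x, hmeet x htop = x;
  (* x /\ y <= z  iff  x <= y => z *)
  hresid : forall x y z,
      hmeet (hmeet x y) z = hmeet x y <-> hmeet x (himp y z) = x
}.
Arguments htop {h}.
Arguments hmeet {h}.
Arguments himp {h}.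

Definition hle (A : HSLat) (x y : A) : Prop := hmeet x y = x.

Record hom (A B : HSLat) := Hom {
  hom_fun :> A -> B;
  hom_top : hom_fun htop = htop;
  hom_meet : forall x y, hom_fun (hmeet x y) = hmeet (hom_fun x) (hom_fun y);
  hom_imp : forall x y, hom_fun (himp x y) = himp (hom_fun x) (hom_fun y)
}.

(* Subobjects of A (in a variety: sub-Heyting-semilattices). *)
Record subalg (A : HSLat) := SubAlg {
  smem :> A -> Prop;
  smem_top : smem htop;
  smem_meet : forall x y, smem x -> smem y -> smem (hmeet x y);
  smem_imp : forall x y, smem x -> smem y -> smem (himp x y)
}.

Section SubHSLat.
Variables (A : HSLat) (S : subalg A).

Let T := {a : A | S a}.

Lemma sig_ext (u v : T) : proj1_sig u = proj1_sig v -> u = v.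
Proof.
destruct u as [a Ha], v as [b Hb]; simpl; intros ->.
f_equal; apply proof_irrelevance.
Qed.

Definition stop : T := exist _ htop (smem_top S).
Definition smeet (u v : T) : T :=
  exist _ (hmeet (proj1_sig u) (proj1_sig v))
          (smem_meet (proj2_sig u) (proj2_sig v)).
Definition simp (u v : T) : T :=
  exist _ (himp (proj1_sig u) (proj1_sig v))
          (smem_imp (proj2_sig u) (proj2_sig v)).

Lemma smeetA x y z : smeet x (smeet y z) = smeet (smeet x y) z.
Proof. apply sig_ext; simpl; apply hmeetA. Qed.
Lemma smeetC x y : smeet x y = smeet y x.
Proof. apply sig_ext; simpl; apply hmeetC. Qed.
Lemma smeetxx x : smeet x x = x.
Proof. apply sig_ext; simpl; apply hmeetxx. Qed.
Lemma smeet1 x : smeet x stop = x.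
Proof. apply sig_ext; simpl; apply hmeet1. Qed.
Lemma sresid x y z :
  smeet (smeet x y) z = smeet x y <-> smeet x (simp y z) = x.
Proof.
split=> H.
- apply sig_ext; simpl; apply hresid.
  exact (f_equal (@proj1_sig _ _) H).
- apply sig_ext; simpl; apply hresid.
  exact (f_equal (@proj1_sig _ _) H).
Qed.

Definition subHSLat : HSLat :=
  HSLatPack smeetA smeetC smeetxx smeet1 sresid.

End SubHSLat.

(* Terms, used to build coproducts in the variety HSLat.               *)
Inductive term (V : Type) : Type :=
| tvar of V
| ttop
| tmeet of term V & term V
| timp of term V & term V.
Arguments ttop {V}.

Fixpoint teval (A : HSLat) (V : Type) (rho : V -> A) (t : term V) : A :=
  match t with
  | tvar v => rho v
  | ttop => htop
  | tmeet t1 t2 => hmeet (teval rho t1) (teval rho t2)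
  | timp t1 t2 => himp (teval rho t1) (teval rho t2)
  end.

(* Generators of the coproduct X_0 + ... + X_{n-1}: the elements of the X_i. *)
Definition gen (n : nat) (X : 'I_n -> HSLat) : Type := {i : 'I_n & X i}.

(* The coproduct X_0 + ... + X_{n-1} is (terms over gen X) modulo the
   congruence "equal under every cotuple [f_0,...,f_{n-1}] into every B".
   The cosmash product X_0 <> ... <> X_{n-1} is the kernel of the map to
   prod_k coprod_{j<>k} X_j whose k-th component kills X_k (zero map, i.e.
   constant 1) and includes the other X_j.  An element t of the coproduct
   is in this kernel iff for every k its k-th component is 1 in
   coprod_{j<>k} X_j, i.e. iff for every k, every B and every family of
   morphisms f_j : X_j -> B, the value of t with X_k sent to 1 and X_j
   (j <> k) sent through f_j equals 1.                                  *)
Definition in_cosmash (n : nat) (X : 'I_n -> HSLat) (t : term (gen X)) : Prop :=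
  forall (k : 'I_n) (B : HSLat) (f : forall i, hom (X i) B),
    teval (fun p : gen X =>
             if projT1 p == k then htop else f (projT1 p) (projT2 p)) t
    = htop.

(* Higgins commutator [S_0, ..., S_{n-1}] of subobjects S_i of A: the image
   of the cosmash product under the cotuple <s_0,...,s_{n-1}> : coprod S_i -> A
   (the inclusions).  Given as a predicate on A (its image subobject). *)
Definition higgins (A : HSLat) (n : nat) (S : 'I_n -> subalg A) : A -> Prop :=
  fun a => exists t : term (gen (fun i => subHSLat (S i))),
      in_cosmash t /\
      teval (fun p : gen (fun i => subHSLat (S i)) => proj1_sig (projT2 p)) t = a.

Definition is_zero (A : HSLat) (P : A -> Prop) : Prop :=
  forall a, P a -> a = htop.

Definition fam2 (A : HSLat) (X Y : subalg A) : 'I_2 -> subalg A :=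
  fun i => nth X [:: X; Y] i.
Definition fam3 (A : HSLat) (X Y Z : subalg A) : 'I_3 -> subalg A :=
  fun i => nth X [:: X; Y; Z] i.

Definition comm2 (A : HSLat) (X Y : subalg A) : A -> Prop :=
  higgins (fam2 X Y).
Definition comm3 (A : HSLat) (X Y Z : subalg A) : A -> Prop :=
  higgins (fam3 X Y Z).

(* Normal closure X^A: the intersection of all normal subobjects (kernels
   {a | f a = 1} of morphisms f : A -> B) containing X; this intersection
   is itself a kernel (of A -> prod B), hence the smallest normal
   subobject containing X. *)
Definition ncl_mem (A : HSLat) (X : subalg A) (a : A) : Prop :=
  forall (B : HSLat) (f : hom A B), (forall x, X x -> f x = htop) -> f a = htop.

Lemma imp11 (B : HSLat) : himp (@htop B) htop = htop.
Proof.
have H : hmeet (@htop B) (himp htop htop) = htop.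
  by apply hresid; rewrite !hmeetxx.
by rewrite hmeetC hmeet1 in H.
Qed.

Lemma ncl_top (A : HSLat) (X : subalg A) : ncl_mem X htop.
Proof. by move=> B f _; rewrite hom_top. Qed.
Lemma ncl_meet (A : HSLat) (X : subalg A) x y :
  ncl_mem X x -> ncl_mem X y -> ncl_mem X (hmeet x y).
Proof. by move=> Hx Hy B f Hf; rewrite hom_meet (Hx B f Hf) (Hy B f Hf) hmeetxx. Qed.
Lemma ncl_imp (A : HSLat) (X : subalg A) x y :
  ncl_mem X x -> ncl_mem X y -> ncl_mem X (himp x y).
Proof. by move=> Hx Hy B f Hf; rewrite hom_imp (Hx B f Hf) (Hy B f Hf) imp11. Qed.

Definition nclosure (A : HSLat) (X : subalg A) : subalg A :=
  SubAlg (@ncl_top A X) (@ncl_meet A X) (@ncl_imp A X).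

(* In the five-element Heyting algebra 0 < a, b < c < 1, the subalgebras
   X = {a, 1} and Y = {b, 1} generate the Boolean subalgebra {0, a, b, 1},
   a copy of 2 x 2 in which X and Y are the two coordinate factors: X and Y
   cooperate, so every element of the cosmash product X <> Y is sent to 1
   and [X, Y] = 0.  On the other hand the terms (x => z) => ((y => z) => z)
   and (u => v) => v become 1 as soon as any one of their variables is set
   to 1, so they lie in the ternary and binary cosmash products.  At
   x = a, y = b, z = c the first evaluates to c, and since c lies above both
   a and b it belongs to both normal closures, where u = v = c gives c again. *)
From mathcomp Require Import all_boot.

Set Implicit Arguments.
Unset Strict Implicit.
Unset Printing Implicit Defensive.

Section HeytingSemilatticeTheory.
Variable B : HSLat.
Implicit Types x y z : B.

Lemma hmeet1x x : hmeet htop x = x.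
Proof. by rewrite hmeetC hmeet1. Qed.

Lemma himp_eq1 y z : hmeet y z = y <-> himp y z = htop.
Proof. by have := hresid htop y z; rewrite !hmeet1x. Qed.

Lemma himpxx x : himp x x = htop.
Proof. by apply/himp_eq1; rewrite hmeetxx. Qed.

Lemma himpx1 x : himp x htop = htop.
Proof. by apply/himp_eq1; rewrite hmeet1. Qed.

Lemma himpK z y : himp z (himp y z) = htop.
Proof.
apply/himp_eq1; apply/hresid.
by rewrite -hmeetA [hmeet y z]hmeetC hmeetA hmeetxx.
Qed.

Lemma himp1x z : himp htop z = z.
Proof.
set w := himp htop z.
have le_wz : hmeet w z = w.
  by have /(_ (hmeetxx w)) := proj2 (hresid w htop z); rewrite hmeet1.
have le_zw : hmeet z w = z by apply/hresid; rewrite hmeet1 hmeetxx.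
by rewrite -le_zw hmeetC le_wz.
Qed.

End HeytingSemilatticeTheory.

Lemma teval_ext (A : HSLat) (V : Type) (r1 r2 : V -> A) t :
  r1 =1 r2 -> teval r1 t = teval r2 t.
Proof. by move=> eq_r; elim: t => //= t1 -> t2 ->. Qed.

Lemma teval_hom (A B : HSLat) (h : hom A B) (V : Type) (rho : V -> A) t :
  teval (fun v => h (rho v)) t = h (teval rho t).
Proof.
elim: t => [v||t1 IH1 t2 IH2|t1 IH1 t2 IH2] //=.
- by rewrite hom_top.
- by rewrite hom_meet IH1 IH2.
- by rewrite hom_imp IH1 IH2.
Qed.

Definition hom_comp (A B C : HSLat) (g : hom B C) (f : hom A B) : hom A C.
Proof.
apply: (@Hom A C (fun x => g (f x))).
- by rewrite !hom_top.
- by move=> x y; rewrite !hom_meet.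
- by move=> x y; rewrite !hom_imp.
Defined.

Definition subalg_incl (A : HSLat) (S : subalg A) : hom (subHSLat S) A :=
  @Hom (subHSLat S) A (@proj1_sig _ _) erefl (fun _ _ => erefl) (fun _ _ => erefl).

Section ProductHSLat.
Variables B1 B2 : HSLat.
Implicit Types u v w : B1 * B2.

Definition pmeet u v := (hmeet u.1 v.1, hmeet u.2 v.2).
Definition pimp u v := (himp u.1 v.1, himp u.2 v.2).

Lemma pmeetA u v w : pmeet u (pmeet v w) = pmeet (pmeet u v) w.
Proof. by rewrite /pmeet /= !hmeetA. Qed.
Lemma pmeetC u v : pmeet u v = pmeet v u.
Proof. by rewrite /pmeet hmeetC [hmeet u.2 _]hmeetC. Qed.
Lemma pmeetxx u : pmeet u u = u.
Proof. by case: u => u1 u2; rewrite /pmeet /= !hmeetxx. Qed.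
Lemma pmeet1 u : pmeet u (htop, htop) = u.
Proof. by case: u => u1 u2; rewrite /pmeet /= !hmeet1. Qed.
Lemma presid u v w : pmeet (pmeet u v) w = pmeet u v <-> pmeet u (pimp v w) = u.
Proof.
case: u => u1 u2; rewrite /pmeet /pimp /=.
by split=> /pair_equal_spec[E1 E2]; apply/pair_equal_spec; split; apply/hresid.
Qed.

Definition prodHSLat : HSLat := HSLatPack pmeetA pmeetC pmeetxx pmeet1 presid.

Lemma teval_pair (V : Type) (r1 : V -> B1) (r2 : V -> B2) t :
  @teval prodHSLat V (fun p => (r1 p, r2 p)) t = (teval r1 t, teval r2 t).
Proof. by elim: t => //= t1 -> t2 ->. Qed.

End ProductHSLat.

Lemma fam2E (A : HSLat) (X Y : subalg A) (i : 'I_2) :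
  fam2 X Y i = if i == ord0 then X else Y.
Proof. by case: i => [[|[|m]] lt_i2]. Qed.

(* A cosmash element is sent to 1 by h1, which kills Y, and by h2, which
   kills X; psi recovers its value in A from these two images. *)
Lemma comm2_zero_split (A B1 B2 : HSLat) (X Y : subalg A)
    (h1 : hom A B1) (h2 : hom A B2) (psi : hom (prodHSLat B1 B2) A) :
  (forall y, Y y -> h1 y = htop) -> (forall x, X x -> h2 x = htop) ->
  (forall a, X a \/ Y a -> psi (h1 a, h2 a) = a) ->
  is_zero (comm2 X Y).
Proof.
move=> h1Y h2X psiK _ [t [cosm_t <-]].
pose val_t (p : gen (fun i => subHSLat (fam2 X Y i))) : A := proj1_sig (projT2 p).
change (teval val_t t = htop).
have val_XY p : X (val_t p) \/ Y (val_t p).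
  case: p => i [a]; rewrite /val_t /= fam2E.
  by case: (i == ord0) => ?; [left | right].
have killed_by B (h : hom A B) k :
    (forall p, projT1 p == k -> h (val_t p) = htop) ->
    teval (fun p => h (val_t p)) t = htop.
  move=> hk; rewrite -(cosm_t k B (fun i => hom_comp h (subalg_incl (fam2 X Y i)))).
  apply: teval_ext => p /=.
  by case: eqP => [/eqP/hk|].
have h1t : teval (fun p => h1 (val_t p)) t = htop.
  apply: (killed_by _ _ ord_max) => -[i [a Sa]] /eqP /= i_max; rewrite /val_t /=.
  by move: Sa; rewrite fam2E i_max; exact: h1Y.
have h2t : teval (fun p => h2 (val_t p)) t = htop.
  apply: (killed_by _ _ ord0) => -[i [a Sa]] /eqP /= i0; rewrite /val_t /=.
  by move: Sa; rewrite fam2E i0; exact: h2X.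
rewrite (teval_ext t (fun p => esym (psiK _ (val_XY p)))).
by rewrite teval_hom teval_pair h1t h2t (hom_top psi).
Qed.

Section CosmashWitnesses.
Variables (A : HSLat) (X Y Z : subalg A).

Lemma comm2_imp_imp x y : X x -> Y y -> comm2 X Y (himp (himp x y) y).
Proof.
move=> Xx Yy.
pose gx : gen (fun i => subHSLat (fam2 X Y i)) := existT _ ord0 (exist _ x Xx).
pose gy : gen (fun i => subHSLat (fam2 X Y i)) := existT _ ord_max (exist _ y Yy).
exists (timp (timp (tvar gx) (tvar gy)) (tvar gy)); split=> //.
move=> [[|[|m]] lt_k2] B f //=.
- by rewrite himp1x himpxx.
- by rewrite !himpx1.
Qed.

Lemma comm3_imp_imp x y z : X x -> Y y -> Z z ->
  comm3 X Y Z (himp (himp x z) (himp (himp y z) z)).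
Proof.
move=> Xx Yy Zz.
pose G := gen (fun i => subHSLat (fam3 X Y Z i)).
pose gx : G := existT _ ord0 (exist _ x Xx).
pose gy : G := existT _ (Ordinal (isT : 1 < 3)) (exist _ y Yy).
pose gz : G := existT _ ord_max (exist _ z Zz).
exists (timp (timp (tvar gx) (tvar gz)) (timp (timp (tvar gy) (tvar gz)) (tvar gz))).
split=> //; move=> [[|[|[|m]]] lt_k3] B f //=.
- by rewrite himp1x himpK.
- by rewrite himp1x himpxx himpx1.
- by rewrite !himpx1.
Qed.

End CosmashWitnesses.

Lemma ncl_mem_ge (A : HSLat) (X : subalg A) x a : X x -> hle x a -> ncl_mem X a.
Proof.
move=> Xx le_xa B f fX1; have := f_equal f le_xa.
by rewrite hom_meet (fX1 x Xx) hmeet1x.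
Qed.

Definition subalg_gen (A : HSLat) (x : A) : subalg A.
Proof.
apply: (@SubAlg A (fun a => a = x \/ a = htop)); first by right.
- move=> a b [->|->] [->|->]; rewrite ?hmeetxx ?hmeet1 ?hmeet1x; by [left | right].
- move=> a b [->|->] [->|->]; rewrite ?himpxx ?himpx1 ?himp1x; by [left | right].
Defined.

Lemma subalg_gen_mem (A : HSLat) (x : A) : subalg_gen x x.
Proof. by left. Qed.

Lemma bool_resid x y z : (x && y) && z = x && y <-> x && (y ==> z) = x.
Proof. by case: x; case: y; case: z; split. Qed.

Definition boolHSLat : HSLat :=
  @HSLatPack bool true andb implb andbA andbC andbb andbT bool_resid.

Inductive L5 := L0 | La | Lb | Lc | L1.

Definition meet5 (x y : L5) : L5 :=
  match x, y with
  | L1, y => y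
  | x, L1 => x
  | Lc, y => y
  | x, Lc => x
  | La, La => La
  | Lb, Lb => Lb
  | _, _ => L0
  end.

Definition imp5 (x y : L5) : L5 :=
  match x, y with
  | L0, _ | _, L1 => L1
  | L1, y => y
  | La, (La | Lc) | Lb, (Lb | Lc) | Lc, Lc => L1
  | La, _ => Lb
  | Lb, _ => La
  | Lc, y => y
  end.

Lemma meet5A x y z : meet5 x (meet5 y z) = meet5 (meet5 x y) z.
Proof. by case: x; case: y; case: z. Qed.
Lemma meet5C x y : meet5 x y = meet5 y x.
Proof. by case: x; case: y. Qed.
Lemma meet5xx x : meet5 x x = x.
Proof. by case: x. Qed.
Lemma meet51 x : meet5 x L1 = x.
Proof. by case: x. Qed.
Lemma resid5 x y z : meet5 (meet5 x y) z = meet5 x y <-> meet5 x (imp5 y z) = x.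
Proof. by case: x; case: y; case: z; split. Qed.

Definition L5HSLat : HSLat := HSLatPack meet5A meet5C meet5xx meet51 resid5.

Definition above_a (x : L5) : bool :=
  match x with La | Lc | L1 => true | _ => false end.
Definition above_b (x : L5) : bool :=
  match x with Lb | Lc | L1 => true | _ => false end.

Definition above_a_hom : hom L5HSLat boolHSLat.
Proof. by apply: (@Hom L5HSLat boolHSLat above_a) => //; case; case. Defined.
Definition above_b_hom : hom L5HSLat boolHSLat.
Proof. by apply: (@Hom L5HSLat boolHSLat above_b) => //; case; case. Defined.

(* Inverse of <above_b, above_a> on the Boolean subalgebra {0, a, b, 1}. *)
Definition bool2_L5 (p : bool * bool) : L5 :=
  match p with
  | (true, true) => L1
  | (false, true) => La
  | (true, false) => Lb
  | (false, false) => L0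
  end.

Definition bool2_L5_hom : hom (prodHSLat boolHSLat boolHSLat) L5HSLat.
Proof.
by apply: (@Hom (prodHSLat boolHSLat boolHSLat) L5HSLat bool2_L5) => //;
  case=> [[] []] [[] []].
Defined.

Lemma L5_comm2_zero :
  is_zero (comm2 (subalg_gen (La : L5HSLat)) (subalg_gen (Lb : L5HSLat))).
Proof.
apply: (comm2_zero_split (h1 := above_b_hom) (h2 := above_a_hom) (psi := bool2_L5_hom)).
- by move=> y [->|->].
- by move=> x [->|->].
- by move=> a [[]|[]] ->.
Qed.

Theorem mainTheorem2 :
  (exists (A : HSLat) (X Y Z : subalg A),
      is_zero (comm2 X Y) /\ ~ is_zero (comm3 X Y Z)) /\
  (exists (A : HSLat) (X Y : subalg A),
      is_zero (comm2 X Y) /\ ~ is_zero (comm2 (nclosure X) (nclosure Y))).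
Proof.
pose gen5 (x : L5HSLat) := subalg_gen x.
have gen5_mem x : gen5 x x := subalg_gen_mem x.
have nonzero_c (P : L5HSLat -> Prop) : P Lc -> ~ is_zero P by move=> Pc /(_ _ Pc).
split.
- exists L5HSLat, (gen5 La), (gen5 Lb), (gen5 Lc); split; first exact: L5_comm2_zero.
  apply: nonzero_c.
  exact: (comm3_imp_imp (gen5_mem La) (gen5_mem Lb) (gen5_mem Lc)).
- exists L5HSLat, (gen5 La), (gen5 Lb); split; first exact: L5_comm2_zero.
  apply: nonzero_c.
  have Xc : nclosure (gen5 La) Lc by apply: (ncl_mem_ge (gen5_mem La)).
  have Yc : nclosure (gen5 Lb) Lc by apply: (ncl_mem_ge (gen5_mem Lb)).
  exact: (comm2_imp_imp Xc Yc).
Qed.
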